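(* Let $\phi(z)\in\mathbb{R}[z]$ be a cubic polynomial with negative lead coefficient. If $\mathfrak{K}_\infty\cap\mathbb{R}$ consists of more than one point, then $\phi$ has at least two distinct real periodic points of period two. Moreover, if $\alpha\in\mathbb{R}$ is the smallest such periodic point, then $\phi(\alpha)$ is the largest, and $\mathfrak{K}_\infty\cap\mathbb{R}\subseteq[\alpha,\phi(\alpha)]$.
   Context: The (archimedean) filled Julia set of $\phi$ is $\mathfrak{K}_\infty=\{x\in\mathbb{C}:\{|\phi^n(x)|:n\ge0\}\text{ is bounded}\}$, where $\phi^n$ is the $n$-th iterate of $\phi$. A point $x$ is periodic of period $n$ if $n$ is the least positive integer with $\phi^n(x)=x$. *)

From mathcomp Require Import all_boot all_order all_algebra.
From mathcomp Require Import complex.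
From mathcomp Require Import reals.
Set Implicit Arguments. Unset Strict Implicit. Unset Printing Implicit Defensive.
Import Order.TTheory GRing.Theory Num.Theory.
Local Open Scope ring_scope.
Local Open Scope complex_scope.

Definition polyC_of (R : realType) (phi : {poly R}) : {poly R[i]} :=
  map_poly (fun x : R => x%:C) phi.

(* archimedean filled Julia set: z whose forward orbit under phi is bounded *)
Definition filled_julia (R : realType) (phi : {poly R}) (z : R[i]) : Prop :=
  exists M : R, forall n : nat,
    `| iter n (fun w => (polyC_of phi).[w]) z | <= M%:C.

Definition period_two (R : realType) (phi : {poly R}) (x : R) : Prop :=
  phi.[phi.[x]] = x /\ phi.[x] != x.

From mathcomp Require Import all_boot all_order all_algebra.
From mathcomp Require Import complex reals classical_sets polyrcf lra.
Set Implicit Arguments. Unset Strict Implicit. Unset Printing Implicit Defensive.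
Import Order.TTheory GRing.Theory Num.Theory Num.Def.
Local Open Scope ring_scope.
Local Open Scope complex_scope.

(* Put g := phi o phi - id.  It has degree 9 and positive leading coefficient, so
   it has a least and a greatest real zero a <= b, and phi(phi(t)) > t for t > b,
   phi(phi(t)) < t for t < a.  A real point beyond b therefore has an increasing
   (phi o phi)-orbit, which cannot be bounded: its supremum would be a fixed point
   of phi o phi beyond b; symmetrically below a.  Since phi is a cubic tending to
   -oo at +oo, every value below phi(b) has a preimage beyond b and every value
   above phi(a) a preimage below a, so the bounded real orbits lie in
   [phi(b), phi(a)].  As a and b have bounded orbits while phi(a) and phi(b) are
   fixed points of phi o phi, hence in [a, b], this forces phi(a) = b and
   phi(b) = a; two distinct points with bounded orbits then give a < b. *)

Section RealPolynomial.
Variable R : rcfType.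
Implicit Types (p : {poly R}) (a b t x : R).

Lemma lead_coef_comp_oppX p :
  lead_coef (p \Po -'X) = (-1) ^+ (size p).-1 * lead_coef p.
Proof.
by rewrite lead_coef_comp ?size_polyN ?size_polyX // lead_coefN lead_coefX mulrC.
Qed.

Lemma horner_reflect p t : (- (p \Po -'X)).[t] = - p.[- t].
Proof. by rewrite hornerN horner_comp hornerN hornerX. Qed.

Lemma size_lead_coef_reflect p : ~~ odd (size p) ->
  size (- (p \Po -'X)) = size p /\ lead_coef (- (p \Po -'X)) = lead_coef p.
Proof.
move=> even_p; rewrite size_polyN size_comp_poly2 ?size_polyN ?size_polyX //.
split=> //; have [->|p_neq0] := eqVneq p 0; first by rewrite comp_poly0 oppr0.
rewrite lead_coefN lead_coef_comp_oppX -signr_odd.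
move: p_neq0 even_p; rewrite -size_poly_gt0.
by case: (size p) => //= n _ /negPn ->; rewrite mulN1r opprK.
Qed.

Lemma poly_root_ge p b : 0 < lead_coef p -> p.[b] <= 0 ->
  exists2 x, b <= x & root p x.
Proof.
move=> lp_gt0 pb_le0; have [n pn_ge] := poly_pinfty_gt_lc lp_gt0.
have b_le : b <= maxr b n by rewrite le_max lexx.
have pmax_ge0 : 0 <= p.[maxr b n].
  by rewrite (le_trans (ltW lp_gt0)) // pn_ge // le_max lexx orbT.
have [x /itvP x_in rootx] := polyrcf.poly_ivt b_le (mulr_le0_ge0 pb_le0 pmax_ge0).
by exists x; rewrite ?x_in.
Qed.

Lemma poly_root_le p a : ~~ odd (size p) -> 0 < lead_coef p -> 0 <= p.[a] ->
  exists2 x, x <= a & root p x.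
Proof.
move=> even_p lp_gt0 pa_ge0; have [_ lead_r] := size_lead_coef_reflect even_p.
have reflect_le0 : (- (p \Po -'X)).[- a] <= 0.
  by rewrite horner_reflect opprK oppr_le0.
have [|y ay] := poly_root_ge _ reflect_le0; first by rewrite lead_r.
rewrite /root horner_reflect oppr_eq0 => rooty.
by exists (- y); rewrite // lerNl.
Qed.

Lemma poly_gt0_above_roots p b t : 0 < lead_coef p ->
  (forall x, root p x -> x <= b) -> b < t -> 0 < p.[t].
Proof.
move=> lp_gt0 roots_le bt; rewrite ltNge; apply/negP => /(poly_root_ge lp_gt0).
case=> x tx /roots_le xb.
by move: (lt_le_trans bt (le_trans tx xb)); rewrite ltxx.
Qed.

Lemma poly_lt0_below_roots p a t : ~~ odd (size p) -> 0 < lead_coef p ->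
  (forall x, root p x -> a <= x) -> t < a -> p.[t] < 0.
Proof.
move=> even_p lp_gt0 roots_ge ta; rewrite ltNge; apply/negP.
case/(poly_root_le even_p lp_gt0) => x xt /roots_ge ax.
by move: (le_lt_trans ax (le_lt_trans xt ta)); rewrite ltxx.
Qed.

Lemma poly_extreme_roots p : p != 0 -> ~~ odd (size p) ->
  exists a b, [/\ root p a, root p b & forall x, root p x -> a <= x <= b].
Proof.
move=> p_neq0 even_p; have [x0 rootx0] := odd_poly_root even_p.
have rootsE x : root p x = (x \in rootsR p).
  by rewrite -(roots_on_rootsR p_neq0) in_itv.
rewrite rootsE in rootx0.
set s := rootsR p in rootsE rootx0 *.
have mem_max y0 : y0 \in s -> \big[maxr/y0]_(y <- s) y \in s.
  move=> y0s; rewrite big_seq; apply: (big_ind (fun y => y \in s)) => // u v.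
  by rewrite /maxr; case: ifP.
have mem_min y0 : y0 \in s -> \big[minr/y0]_(y <- s) y \in s.
  move=> y0s; rewrite big_seq; apply: (big_ind (fun y => y \in s)) => // u v.
  by rewrite /minr; case: ifP.
exists (\big[minr/x0]_(y <- s) y), (\big[maxr/x0]_(y <- s) y).
rewrite !rootsE mem_max ?mem_min //; split=> // x; rewrite rootsE => xs.
by rewrite (ge_bigmin_seq _ _ _ _ xs) ?(le_bigmax_seq _ _ _ _ xs).
Qed.

End RealPolynomial.

Section Escape.
Variable R : realType.
Implicit Types (h : {poly R}) (a b x : R).

Lemma iter_horner_unbounded h b x : (forall t, b < t -> t < h.[t]) -> b < x ->
  ~ exists M, forall n, iter n (horner h) x <= M.
Proof.
move=> h_gt bx [M orbit_le]; set u := fun n => iter n (horner h) x.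
pose E := [set u n | n in setT]%classic.
have supE : has_sup E.
  split; first by exists x; exists 0%N.
  by exists M => _ [n _ <-]; exact: orbit_le.
have u_le_sup n : u n <= sup E by apply: sup_upper_bound => //; exists n.
have b_lt_sup : b < sup E := lt_le_trans bx (u_le_sup 0%N).
have gap : 0 < h.[sup E] - sup E by rewrite subr_gt0 h_gt.
have [d d_gt0 h_near] := poly_cont (sup E) h gap.
have [_ [n _ <-] sup_near] := sup_adherent d_gt0 supE.
have /h_near : `|u n - sup E| < d.
  by rewrite distrC ger0_norm ?subr_ge0 ?u_le_sup // ltrBlDl -ltrBlDr.
(* [h (u n)] is [u n.+1], which cannot exceed the supremum *)
have := u_le_sup n.+1; rewrite /= -/(u n) ltr_norml; lra.
Qed.

Lemma iter_horner_unbounded_below h a x :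
  (forall t, t < a -> h.[t] < t) -> x < a ->
  ~ exists M, forall n, M <= iter n (horner h) x.
Proof.
move=> h_lt xa [M orbit_ge].
have h_gt t : - a < t -> t < (- (h \Po -'X)).[t].
  by move=> at_; rewrite horner_reflect ltrNr h_lt // ltrNl.
apply: (iter_horner_unbounded h_gt (x := - x)); first by rewrite ltrN2.
exists (- M) => n.
have -> : iter n (horner (- (h \Po -'X))) (- x) = - iter n (horner h) x.
  by elim: n => //= n ->; rewrite horner_reflect opprK.
by rewrite lerN2.
Qed.

End Escape.

Lemma iter_horner_comp_self (R : comNzRingType) (p : {poly R}) n x :
  iter n (horner (p \Po p)) x = iter n.*2 (horner p) x.
Proof. by elim: n => //= n ->; rewrite horner_comp. Qed.

Section Orbits.
Variable R : realDomainType.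
Implicit Types (p : {poly R}) (x : R).

Definition bounded_orbit p x := exists M, forall n, `|iter n (horner p) x| <= M.

Lemma bounded_orbit_horner p x : bounded_orbit p p.[x] -> bounded_orbit p x.
Proof.
case=> M orbit_le; exists (maxr M `|x|) => -[|n].
  by rewrite le_max lexx orbT.
by rewrite iterSr le_max orbit_le.
Qed.

Lemma bounded_orbit_period2 p x : p.[p.[x]] = x -> bounded_orbit p x.
Proof.
move=> px2; exists (`|x| + `|p.[x]|) => n.
have [->|->] : iter n (horner p) x = x \/ iter n (horner p) x = p.[x].
  by elim: n => [|n [] IH] /=; [left | right; rewrite IH | left; rewrite IH].
- by rewrite lerDl.
- by rewrite lerDr.
Qed.

End Orbits.

Lemma filled_julia_real (R : realType) (p : {poly R}) (x : R) :
  filled_julia p x%:C -> bounded_orbit p x.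
Proof.
have iter_real n :
    iter n (fun w => (polyC_of p).[w]) x%:C = (iter n (horner p) x)%:C.
  by elim: n => //= n ->; rewrite horner_map.
case=> M orbit_le; exists M => n; have := orbit_le n.
by rewrite iter_real normc_def /= expr0n addr0 sqrtr_sqr lecR.
Qed.

Section CubicNegativeLead.
Variable R : realType.
Variable phi : {poly R}.
Hypothesis size_phi : size phi = 4%N.
Hypothesis lead_phi_lt0 : lead_coef phi < 0.

Lemma comp_self_fixed_extremes : exists a b,
  [/\ phi.[phi.[a]] = a, phi.[phi.[b]] = b,
      forall y, phi.[phi.[y]] = y -> a <= y <= b,
      forall t, b < t -> t < phi.[phi.[t]]
    & forall t, t < a -> phi.[phi.[t]] < t].
Proof.
pose g := phi \Po phi - 'X.
have hornerg t : g.[t] = phi.[phi.[t]] - t.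
  by rewrite hornerD hornerN horner_comp hornerX.
have rootg t : root g t = (phi.[phi.[t]] == t) by rewrite rootE hornerg subr_eq0.
have size_comp : size (phi \Po phi) = 10%N.
  have := size_comp_poly phi phi; rewrite size_phi.
  by case: (size _) => [|k] //= ->.
have size_g : size g = 10%N.
  by rewrite size_polyDl size_comp // size_polyN size_polyX.
have lead_g : 0 < lead_coef g.
  rewrite lead_coefDl ?size_comp ?size_polyN ?size_polyX //.
  by rewrite lead_coef_comp ?size_phi // -exprS exprn_even_gt0 //= lt_eqF.
have g_neq0 : g != 0 by rewrite -size_poly_eq0 size_g.
have even_g : ~~ odd (size g) by rewrite size_g.
have [a [b [roota rootb roots_in]]] := poly_extreme_roots g_neq0 even_g.
have fixed_in y : phi.[phi.[y]] = y -> a <= y <= b.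
  by move/eqP; rewrite -rootg => /roots_in.
exists a, b; split=> //; try by apply/eqP; rewrite -rootg.
- move=> t bt; rewrite -subr_gt0 -hornerg; apply: poly_gt0_above_roots bt => //.
  by move=> x /roots_in /andP[].
- move=> t ta; rewrite -subr_lt0 -hornerg; apply: poly_lt0_below_roots ta => //.
  by move=> x /roots_in /andP[].
Qed.

Lemma bounded_orbit_le_fixed b x : (forall t, b < t -> t < phi.[phi.[t]]) ->
  bounded_orbit phi x -> x <= b.
Proof.
move=> above_b [M orbit_le]; rewrite leNgt; apply/negP => bx.
have above_h t : b < t -> t < (phi \Po phi).[t].
  by rewrite horner_comp; apply: above_b.
apply: (iter_horner_unbounded above_h bx); exists M => n.
by rewrite iter_horner_comp_self (le_trans (ler_norm _) (orbit_le n.*2)).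
Qed.

Lemma bounded_orbit_ge_fixed a x : (forall t, t < a -> phi.[phi.[t]] < t) ->
  bounded_orbit phi x -> a <= x.
Proof.
move=> below_a [M orbit_le]; rewrite leNgt; apply/negP => xa.
have below_h t : t < a -> (phi \Po phi).[t] < t.
  by rewrite horner_comp; apply: below_a.
apply: (iter_horner_unbounded_below below_h xa); exists (- M) => n.
rewrite iter_horner_comp_self lerNl (le_trans _ (orbit_le n.*2)) // -normrN.
exact: ler_norm.
Qed.

Lemma preimage_poly y : exists2 q : {poly R},
  [/\ ~~ odd (size q), 0 < lead_coef q & forall t, q.[t] = y - phi.[t]]
  & forall x, root q x = (phi.[x] == y).
Proof.
have size_C : (size y%:P < size phi)%N.
  by rewrite size_phi (leq_ltn_trans (size_polyC_leq1 _)).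
exists (y%:P - phi); last by move=> x; rewrite rootE !hornerE subr_eq0 eq_sym.
rewrite addrC size_polyDl ?size_polyN // size_phi lead_coefDl ?size_polyN //.
by rewrite lead_coefN oppr_gt0; split=> // t; rewrite !hornerE addrC.
Qed.

Lemma period2_cycle_bounds : exists a b,
  [/\ phi.[a] = b, phi.[b] = a,
      forall y, phi.[phi.[y]] = y -> a <= y <= b
    & forall x, bounded_orbit phi x -> a <= x <= b].
Proof.
have [a [b [fixed_a fixed_b fixed_in above_b below_a]]] :=
  comp_self_fixed_extremes.
have phi_b_le y : bounded_orbit phi y -> phi.[b] <= y.
  move=> bounded_y; rewrite leNgt; apply/negP => y_lt.
  have [q [_ lead_q horner_q] root_q] := preimage_poly y.
  have [|x bx] := poly_root_ge lead_q (b := b).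
    by rewrite horner_q subr_le0 ltW.
  rewrite root_q => /eqP phi_x.
  have /(bounded_orbit_le_fixed above_b) xb : bounded_orbit phi x.
    by apply: bounded_orbit_horner; rewrite phi_x.
  have x_eq_b : x = b by apply: le_anti; rewrite xb bx.
  by move: y_lt; rewrite -phi_x x_eq_b ltxx.
have le_phi_a y : bounded_orbit phi y -> y <= phi.[a].
  move=> bounded_y; rewrite leNgt; apply/negP => y_gt.
  have [q [even_q lead_q horner_q] root_q] := preimage_poly y.
  have [|x xa] := poly_root_le even_q lead_q (a := a).
    by rewrite horner_q subr_ge0 ltW.
  rewrite root_q => /eqP phi_x.
  have /(bounded_orbit_ge_fixed below_a) ax : bounded_orbit phi x.
    by apply: bounded_orbit_horner; rewrite phi_x.
  have x_eq_a : x = a by apply: le_anti; rewrite xa ax.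
  by move: y_gt; rewrite -phi_x x_eq_a ltxx.
have /andP [a_le_phi_b _] : a <= phi.[b] <= b by apply: fixed_in; rewrite fixed_b.
have /andP [_ phi_a_le_b] : a <= phi.[a] <= b by apply: fixed_in; rewrite fixed_a.
have phi_b : phi.[b] = a.
  by apply: le_anti; rewrite a_le_phi_b phi_b_le //; apply: bounded_orbit_period2.
have phi_a : phi.[a] = b.
  by apply: le_anti; rewrite phi_a_le_b le_phi_a //; apply: bounded_orbit_period2.
exists a, b; split=> // x bounded_x.
by rewrite -[X in X <= x]phi_b -[X in x <= X]phi_a phi_b_le ?le_phi_a.
Qed.

End CubicNegativeLead.

Theorem lemma4p11 (R : realType) (phi : {poly R}) :
  size phi = 4%N -> lead_coef phi < 0 ->
  (exists x y : R, x != y /\ filled_julia phi x%:C /\ filled_julia phi y%:C) ->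
  (exists a b : R, a != b /\ period_two phi a /\ period_two phi b) /\
  (forall alpha : R, period_two phi alpha ->
     (forall y : R, period_two phi y -> alpha <= y) ->
     (forall y : R, period_two phi y -> y <= phi.[alpha]) /\
     (forall x : R, filled_julia phi x%:C -> alpha <= x <= phi.[alpha])).
Proof.
move=> size_phi lead_phi [x [y [x_neq_y [Jx Jy]]]].
have [a [b [phi_a phi_b fixed_in bounded_in]]] :=
  period2_cycle_bounds size_phi lead_phi.
have a_lt_b : a < b.
  rewrite ltNge; apply: contra x_neq_y => b_le_a.
  case/andP: (bounded_in _ (filled_julia_real Jx)) => ax xb.
  case/andP: (bounded_in _ (filled_julia_real Jy)) => ay yb.
  rewrite eq_le (le_trans xb (le_trans b_le_a ay)).
  by rewrite (le_trans yb (le_trans b_le_a ax)).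
have period2_a : period_two phi a by split; rewrite ?phi_a ?phi_b // gt_eqF.
have period2_b : period_two phi b by split; rewrite ?phi_a ?phi_b // lt_eqF.
split; first by exists a, b; rewrite lt_eqF.
move=> alpha [fixed_alpha _] alpha_min.
have -> : alpha = a.
  by apply: le_anti; rewrite alpha_min //; case/andP: (fixed_in _ fixed_alpha).
rewrite phi_a; split=> [z [fixed_z _] | z Jz].
  by case/andP: (fixed_in _ fixed_z).
exact/bounded_in/filled_julia_real.
Qed.
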